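(* Let $\mathbb{K}$ be a field and $f=a_0(x)+a_1(x)y+\cdots+a_n(x)y^n\in\mathbb{K}[x,y]$ with $n\geq 2$, $a_0,\ldots,a_n\in\mathbb{K}[x]$, $a_0a_n\neq 0$, such that $f$ has no nonconstant factor in $\mathbb{K}[x]$ and $\deg a_0>\max\{\deg a_1,\ldots,\deg a_n\}$. If $a_0$ is irreducible in $\mathbb{K}[x]$, or if $a_n$ is irreducible in $\mathbb{K}[x]$ and $\deg a_n\geq\deg a_0-\deg q$ with $q\in\mathbb{K}[x]$ an irreducible factor of $a_0$ of smallest degree, then $f$ is irreducible over $\mathbb{K}[x]$.
   Context: $f$ is regarded as a polynomial in $y$ with coefficients in $\mathbb{K}[x]$; irreducibility over $\mathbb{K}[x]$ means irreducibility in $\mathbb{K}[x][y]$. *)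

From HB Require Import structures.
From mathcomp Require Import all_boot all_order all_algebra.
Set Implicit Arguments. Unset Strict Implicit. Unset Printing Implicit Defensive.
Import GRing.Theory.
Local Open Scope ring_scope.

Definition irreducible_in (R : idomainType) (p : R) : Prop :=
  p != 0 /\ p \isn't a GRing.unit /\
  forall g h : R, p = g * h -> g \is a GRing.unit \/ h \is a GRing.unit.

From HB Require Import structures.
From mathcomp Require Import all_boot all_order all_algebra.
From mathcomp Require Import zify.
From Stdlib Require Import Classical.
Set Implicit Arguments. Unset Strict Implicit.
Import GRing.Theory.
Local Open Scope ring_scope.

(* Suppose f = g h with g = sum b_i y^i and h = sum c_i y^i of y-degrees
   m, k > 0 (a factor of y-degree 0 is a unit since f is primitive). Viewed
   as a polynomial in x, f has as leading coefficient a polynomial in y; it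
   is constant because only a_0 reaches the top x-degree. It is also the
   product of the leading x-coefficients of g and h, so these are constant
   too: deg b_0 > deg b_i and deg c_0 > deg c_i for i > 0. In particular b_0
   and c_0 are nonconstant, which is impossible if a_0 = b_0 c_0 is
   irreducible. If a_n = b_m c_k is irreducible, say c_k is constant; then
   deg q <= deg c_0 and deg a_n = deg b_m < deg b_0 = deg a_0 - deg c_0
   <= deg a_0 - deg q. *)

Section CoefDominance.
Variable R : idomainType.
Implicit Types p g h : {poly {poly R}}.

Definition coef0_dominant p := forall i, (0 < i)%N -> (size (p`_i)%R < size (p`_0)%R)%N.

Lemma leq_size_coef_eq0 (u : {poly R}) n :
  (size u <= n.+1)%N -> u`_n = 0 -> (size u <= n)%N.
Proof.
move=> size_u un0; apply/leq_sizeP => j; rewrite leq_eqVlt => /orP[/eqP <- //|n_lt_j].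
by rewrite nth_default // (leq_trans size_u).
Qed.

Lemma coef0_dominantP p :
  p != 0 -> coef0_dominant p <-> size (lead_coef (swapXY p)) = 1%N.
Proof.
move=> p_neq0; set s := size (swapXY p).
have s_gt0 : (0 < s)%N by rewrite size_poly_gt0 swapXY_eq0.
have coef_lead i : (lead_coef (swapXY p))`_i = p`_i`_s.-1 by rewrite coef_swapXY.
have size_coef i : (size (p`_i)%R <= s.-1.+1)%N by rewrite prednK // /s -sizeYE max_size_coefXY.
have lead_neq0 : lead_coef (swapXY p) != 0 by rewrite lead_coef_eq0 swapXY_eq0.
split=> [p_dom | lead1 i i_gt0].
  apply/eqP; rewrite eqn_leq size_poly_gt0 lead_neq0 andbT.
  apply/leq_sizeP => -[//|i] _; rewrite coef_lead nth_default //.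
  by rewrite -ltnS prednK // (leq_trans (p_dom _ _)) // /s -sizeYE max_size_coefXY.
have /size1_polyC lead_const : (size (lead_coef (swapXY p)) <= 1)%N by rewrite lead1.
have coef0_top : p`_0`_s.-1 != 0.
  by rewrite -coef_lead; apply: contraNneq lead_neq0 => l0; rewrite lead_const l0.
have top_zero : p`_i`_s.-1 = 0.
  by rewrite -coef_lead lead_const coefC; case: i i_gt0.
apply: leq_ltn_trans (leq_size_coef_eq0 (size_coef i) top_zero) _.
by rewrite ltnNge; apply: contra coef0_top => size_le; rewrite nth_default.
Qed.

Lemma coef0_dominantMl g h :
  g * h != 0 -> coef0_dominant (g * h) -> coef0_dominant g.
Proof.
rewrite mulf_eq0 negb_or => /andP[g_neq0 h_neq0].
rewrite !coef0_dominantP ?mulf_neq0 // rmorphM lead_coefM => /eqP.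
by rewrite size_mul_eq1 => /andP[/eqP].
Qed.

Lemma coef0_dominant_lead p :
  coef0_dominant p -> (1 < size p)%N ->
  (0 < size (lead_coef p) < size (p`_0)%R)%N.
Proof.
move=> p_dom size_p; rewrite size_poly_gt0 lead_coef_eq0 -size_poly_gt0 ltnW //=.
by apply: p_dom; rewrite -ltnS prednK // ltnW.
Qed.

Lemma irredp_mul_size1 (u v : {poly R}) :
  irreducible_poly (u * v) -> (size u == 1%N) || (size v == 1%N).
Proof.
move=> uv_irr; have uv_neq0 := irredp_neq0 uv_irr.
have [u_neq0 v_neq0] : u != 0 /\ v != 0 by apply/andP; rewrite -negb_or -mulf_eq0.
have [//|/uv_irr /(_ (dvdp_mulIl u v)) /eqp_size] := eqVneq (size u) 1%N.
have := size_poly_gt0 u; rewrite size_mul // u_neq0; lia.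
Qed.

End CoefDominance.

Section Irreducibility.
Variable K : fieldType.

Lemma irredp_dvd_exists (p : {poly K}) :
  (1 < size p)%N -> exists2 r, irreducible_poly r & r %| p.
Proof.
have [n] := ubnP (size p); elim: n p => // n IHn p /ltnSE size_p p_gt1.
apply: NNPP => no_irr_dvd; apply: (no_irr_dvd); exists p => //.
split=> // q q_neq1 q_dvd; apply: contraT => q_not_p.
have p_neq0 : p != 0 by rewrite -size_poly_gt0 ltnW.
have q_neq0 : q != 0 by apply: contraNneq p_neq0 => q0; rewrite -dvd0p -q0.
have q_lt : (size q < size p)%N.
  by rewrite ltn_neqAle dvdp_size_eqp // q_not_p dvdp_leq.
have q_gt1 : (1 < size q)%N by move: q_neq1 (size_poly_gt0 q); rewrite q_neq0; lia.
have [r r_irr r_dvd] := IHn q (leq_trans q_lt size_p) q_gt1.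
by case: no_irr_dvd; exists r => //; apply: dvdp_trans q_dvd.
Qed.

Lemma min_irredp_dvd_size (a p q : {poly K}) :
  (forall r, irreducible_poly r -> r %| a -> (size q <= size r)%N) ->
  p %| a -> (1 < size p)%N -> (size q <= size p)%N.
Proof.
move=> q_min p_dvd p_gt1; have [r r_irr r_dvd] := irredp_dvd_exists p_gt1.
apply: leq_trans (q_min r r_irr (dvdp_trans r_dvd p_dvd)) _.
by rewrite dvdp_leq // -size_poly_gt0 ltnW.
Qed.

Lemma factor_unit_or_size_gt1 (f g h : {poly {poly K}}) :
  (forall (d : {poly K}) (g : {poly {poly K}}), f = d%:P * g -> (size d <= 1)%N) ->
  f != 0 -> f = g * h -> g \is a GRing.unit \/ (1 < size g)%N.
Proof.
move=> f_primitive f_neq0 fE; have [size_g|] := leqP (size g) 1; last by right.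
left; have gE := size1_polyC size_g.
have [g_neq0 _] : g != 0 /\ h != 0 by apply/andP; rewrite -negb_or -mulf_eq0 -fE.
have g0_neq0 : g`_0 != 0 by apply: contraNneq g_neq0 => g00; rewrite gE g00.
have size_g0 : (size (g`_0)%R <= 1)%N by apply: (f_primitive _ h); rewrite -gE.
have g00_neq0 : g`_0`_0 != 0.
  by apply: contraNneq g0_neq0 => g000; rewrite (size1_polyC size_g0) g000.
rewrite poly_unitE eqn_leq size_g size_poly_gt0 g_neq0.
by rewrite poly_unitE eqn_leq size_g0 size_poly_gt0 g0_neq0 unitfE.
Qed.

Lemma coef0_dominant_degree_gap (g h : {poly {poly K}}) (q : {poly K}) :
  coef0_dominant g -> coef0_dominant h -> (1 < size g)%N -> (1 < size h)%N ->
  size (lead_coef h) = 1%N ->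
  (forall r, irreducible_poly r -> r %| (g * h)`_0 -> (size q <= size r)%N) ->
  ((size (lead_coef (g * h))).-1 < (size ((g * h)`_0)%R).-1 - (size q).-1)%N.
Proof.
move=> g_dom h_dom size_g size_h lead_h1 q_min.
have /andP[lead_g_gt0 lead_g_lt] := coef0_dominant_lead g_dom size_g.
have /andP[_ lead_h_lt] := coef0_dominant_lead h_dom size_h.
have size_q : (size q <= size (h`_0)%R)%N.
  by apply: min_irredp_dvd_size q_min _ _; rewrite ?coef0M ?dvdp_mull // -lead_h1.
have nz (u : {poly K}) : (0 < size u)%N -> u != 0 by rewrite size_poly_gt0.
have h0_gt1 : (1 < size (h`_0)%R)%N by rewrite -lead_h1.
rewrite coef0M lead_coefM !size_mul ?nz ?lead_h1 //; last 2 first.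
- exact: leq_ltn_trans lead_g_lt.
- exact: ltnW.
move: lead_g_gt0 lead_g_lt h0_gt1 size_q.
(* [lia] would see the differently elaborated occurrences of these sizes as distinct atoms. *)
move: (size (lead_coef g)) (size (g`_0)%R) (size (h`_0)%R) => lg b0 c0.
lia.
Qed.

End Irreducibility.

Theorem corollary3 (K : fieldType) (f : {poly {poly K}}) :
  (2 <= (size f).-1)%N ->
  f`_0 * lead_coef f != 0 ->
  (forall (d : {poly K}) (g : {poly {poly K}}), f = d%:P * g -> (size d <= 1)%N) ->
  (forall i : nat, (0 < i <= (size f).-1)%N -> (size (f`_i)%R < size (f`_0)%R)%N) ->
  (irreducible_poly f`_0 \/
   (irreducible_poly (lead_coef f) /\
    exists q : {poly K},
      [/\ irreducible_poly q, q %| f`_0,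
          (forall r : {poly K}, irreducible_poly r -> r %| f`_0 -> (size q <= size r)%N)
        & ((size (f`_0)%R).-1 - (size q).-1 <= (size (lead_coef f)).-1)%N])) ->
  irreducible_in f.
Proof.
move=> n_ge2 a0an_neq0 f_primitive deg_a0 coef_irr.
have [a0_neq0 an_neq0] : f`_0 != 0 /\ lead_coef f != 0.
  by apply/andP; rewrite -negb_or -mulf_eq0.
have f_neq0 : f != 0 by rewrite -lead_coef_eq0.
have f_dom : coef0_dominant f.
  move=> i i_gt0; have [i_le|i_gt] := leqP i (size f).-1; first by rewrite deg_a0 ?i_gt0.
  by rewrite nth_default ?size_poly0 ?size_poly_gt0 //; move: i_gt; case: (size f).
split=> //; split=> [|g h fE].
  by rewrite poly_unitE; apply/nandP; left; apply: contraTN n_ge2 => /eqP ->.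
have [|g_gt1] := factor_unit_or_size_gt1 f_primitive f_neq0 fE; first by left.
have [|h_gt1] := factor_unit_or_size_gt1 f_primitive f_neq0 (etrans fE (mulrC g h)); first by right.
have gh_neq0 : g * h != 0 by rewrite -fE.
have g_dom : coef0_dominant g by apply: coef0_dominantMl gh_neq0 _; rewrite -fE.
have h_dom : coef0_dominant h by apply: (@coef0_dominantMl _ h g); rewrite mulrC -fE.
have /andP[lead_g_gt0 lead_g_lt] := coef0_dominant_lead g_dom g_gt1.
have /andP[lead_h_gt0 lead_h_lt] := coef0_dominant_lead h_dom h_gt1.
case: coef_irr => [|[an_irr [q [_ _ q_min]]]].
  rewrite fE coef0M => /irredp_mul_size1 /orP[] /eqP size1.
    by move: (leq_ltn_trans lead_g_gt0 lead_g_lt); rewrite size1.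
  by move: (leq_ltn_trans lead_h_gt0 lead_h_lt); rewrite size1.
rewrite fE in an_irr q_min *; rewrite leqNgt => /negP deg_an; exfalso; apply: deg_an.
rewrite lead_coefM in an_irr; case/orP: (irredp_mul_size1 an_irr) => /eqP lead1.
  by rewrite [g * h]mulrC; apply: coef0_dominant_degree_gap => //; rewrite mulrC.
exact: coef0_dominant_degree_gap.
Qed.
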